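(* Let $l\in\mathbb N$, $0\le\rho,\delta\le1$, $m\in\mathbb R$, $\tilde m\in\mathbb N_0$, $0<\tau<1$, $M\in\mathbb N_0\cup\{\infty\}$ with $M\ge n+4$, and $a\in C^{\tilde m,\tau}S^m_{\rho,\delta}(\mathbb R^n\times\mathbb R^n;M;\mathscr L(\mathbb C^l))$. Assume that for every $\alpha$ with $|\alpha|\le n+3$ and every $\xi$ the limit $\lim_{|x|\to\infty}\partial_\xi^\alpha a(x,\xi)=\partial_\xi^\alpha a(\infty,\xi)$ exists, where $a(\infty,\xi):=\lim_{|x|\to\infty}a(x,\xi)$, and that $$\sup_{\xi\in\mathbb R^n}\|a(x,\xi)-a(\infty,\xi)\|_{\mathscr L(\mathbb C^l)}\langle\xi\rangle^{-m}\to0\quad(|x|\to\infty).$$ Then for every $\alpha$ with $|\alpha|\le n+2$, $\|\partial_\xi^\alpha a(x,\xi)-\partial_\xi^\alpha a(\infty,\xi)\|_{\mathscr L(\mathbb C^l)}\langle\xi\rangle^{-m+\rho|\alpha|}\to0$ as $|x|\to\infty$, uniformly in $\xi\in\mathbb R^n$.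
   Context: $\langle\xi\rangle=(1+|\xi|^2)^{1/2}$, $\mathscr L(\mathbb C^l)\cong\mathbb C^{l\times l}$. Hölder norm $\|f\|_{C^{\tilde m,\tau}}=\max_{|\beta|\le\tilde m}\big(\sup|\partial^\beta f|+\sup_{x\ne y}|\partial^\beta f(x)-\partial^\beta f(y)|/|x-y|^\tau\big)$. $C^{\tilde m,\tau}S^m_{\rho,\delta}(\mathbb R^n\times\mathbb R^n;M;\mathscr L(\mathbb C^l))$: $a:\mathbb R^{2n}\to\mathbb C^{l\times l}$ with, for $|\beta|\le\tilde m$, $|\alpha|\le M$: $\partial_x^\beta a(x,\cdot)\in C^M$; $\partial_x^\beta\partial_\xi^\alpha a$ continuous; $\|\partial_\xi^\alpha a(x,\xi)\|\le C_\alpha\langle\xi\rangle^{m-\rho|\alpha|}$; $\|\partial_\xi^\alpha a(\cdot,\xi)\|_{C^{\tilde m,\tau}}\le C_\alpha\langle\xi\rangle^{m-\rho|\alpha|+\delta(\tilde m+\tau)}$. *)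

From Stdlib Require Import Reals List.
Open Scope R_scope.

Fixpoint rsum (k : nat) (f : nat -> R) : R :=
  match k with O => 0 | S k' => rsum k' f + f k' end.

(** Points of R^n: real sequences vanishing from index n on. *)
Definition vec := nat -> R.
Definition inRn (n : nat) (x : vec) : Prop := forall i, (n <= i)%nat -> x i = 0.
Definition vadd (x y : vec) : vec := fun i => x i + y i.
Definition vsub (x y : vec) : vec := fun i => x i - y i.
Definition vscale (t : R) (x : vec) : vec := fun i => t * x i.
Definition ej (j : nat) : vec := fun i => if Nat.eqb i j then 1 else 0.
Definition vnorm (n : nat) (x : vec) : R := sqrt (rsum n (fun i => x i ^ 2)).
Definition jb (n : nat) (xi : vec) : R := sqrt (1 + vnorm n xi ^ 2).

(** Complex numbers as pairs (re, im); l x l complex matrices (entries i,j < l). *)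
Definition Cx := (R * R)%type.
Definition cadd (z w : Cx) : Cx := (fst z + fst w, snd z + snd w).
Definition cmul (z w : Cx) : Cx :=
  (fst z * fst w - snd z * snd w, fst z * snd w + snd z * fst w).
Definition cabs2 (z : Cx) : R := fst z ^ 2 + snd z ^ 2.
Definition cvec := nat -> Cx.
Definition Mat := nat -> nat -> Cx.
Definition msub (A B : Mat) : Mat :=
  fun i k => (fst (A i k) - fst (B i k), snd (A i k) - snd (B i k)).
Fixpoint csum (k : nat) (f : nat -> Cx) : Cx :=
  match k with O => (0, 0) | S k' => cadd (csum k' f) (f k') end.
Definition matvec (l : nat) (A : Mat) (v : cvec) : cvec :=
  fun i => csum l (fun k => cmul (A i k) (v k)).
Definition cvnorm (l : nat) (v : cvec) : R := sqrt (rsum l (fun i => cabs2 (v i))).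
Definition opnorm_le (l : nat) (A : Mat) (c : R) : Prop :=
  forall v : cvec, cvnorm l (matvec l A v) <= c * cvnorm l v.

Definition has_partial (n l j : nat) (F G : vec -> Mat) : Prop :=
  forall y, inRn n y -> forall i k, (i < l)%nat -> (k < l)%nat ->
    derivable_pt_lim (fun t => fst (F (vadd y (vscale t (ej j))) i k)) 0 (fst (G y i k)) /\
    derivable_pt_lim (fun t => snd (F (vadd y (vscale t (ej j))) i k)) 0 (snd (G y i k)).

(** Iterated partial derivatives along a list of directions (first the head). *)
Fixpoint has_iter (n l : nat) (ds : list nat) (F G : vec -> Mat) : Prop :=
  match ds with
  | nil => forall y, inRn n y -> forall i k, (i < l)%nat -> (k < l)%nat -> G y i k = F y i k
  | j :: ds' => exists F', has_partial n l j F F' /\ has_iter n l ds' F' G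
  end.

(** Multi-indices alpha in N_0^n (entries alpha i for i < n). *)
Definition mi_list (n : nat) (alpha : nat -> nat) : list nat :=
  flat_map (fun i => repeat i (alpha i)) (seq 0 n).
Definition mi_abs (n : nat) (alpha : nat -> nat) : nat :=
  fold_right Nat.add 0%nat (map alpha (seq 0 n)).
Definition mi_zero : nat -> nat := fun _ => 0%nat.

Definition Dv (n l : nat) (alpha : nat -> nat) (F G : vec -> Mat) : Prop :=
  has_iter n l (mi_list n alpha) F G.
Definition DXi (n l : nat) (alpha : nat -> nat) (a b : vec -> vec -> Mat) : Prop :=
  forall x, inRn n x -> Dv n l alpha (a x) (b x).
Definition DX (n l : nat) (beta : nat -> nat) (a b : vec -> vec -> Mat) : Prop :=
  forall xi, inRn n xi -> Dv n l beta (fun x => a x xi) (fun x => b x xi).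

(** M in N_0 \cup {oo}: None = oo. *)
Definition leM (k : nat) (M : option nat) : Prop :=
  match M with None => True | Some M' => (k <= M')%nat end.

Definition continuous_Rn (n l : nat) (G : vec -> Mat) : Prop :=
  forall y, inRn n y -> forall eps, 0 < eps -> exists d, 0 < d /\
    forall y', inRn n y' -> vnorm n (vsub y' y) < d -> opnorm_le l (msub (G y') (G y)) eps.

Definition continuous_R2n (n l : nat) (G : vec -> vec -> Mat) : Prop :=
  forall x xi, inRn n x -> inRn n xi -> forall eps, 0 < eps -> exists d, 0 < d /\
    forall x' xi', inRn n x' -> inRn n xi' ->
      vnorm n (vsub x' x) + vnorm n (vsub xi' xi) < d ->
      opnorm_le l (msub (G x' xi') (G x xi)) eps.

Definition CM (n l : nat) (M : option nat) (F : vec -> Mat) : Prop :=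
  forall ds : list nat, Forall (fun j => (j < n)%nat) ds -> leM (length ds) M ->
    exists G, has_iter n l ds F G /\ continuous_Rn n l G.

Definition holder_le (n l mt : nat) (tau : R) (f : vec -> Mat) (K : R) : Prop :=
  forall beta, (mi_abs n beta <= mt)%nat ->
    exists g S1 S2, Dv n l beta f g /\ S1 + S2 <= K /\
      (forall x, inRn n x -> opnorm_le l (g x) S1) /\
      (forall x y, inRn n x -> inRn n y -> x <> y ->
         opnorm_le l (msub (g x) (g y)) (S2 * Rpower (vnorm n (vsub x y)) tau)).

Definition symbol_class (n l mt : nat) (tau m rho delta : R) (M : option nat)
    (a : vec -> vec -> Mat) : Prop :=
  (forall beta, (mi_abs n beta <= mt)%nat ->
     exists b, DX n l beta a b /\ forall x, inRn n x -> CM n l M (b x)) /\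
  (forall beta alpha, (mi_abs n beta <= mt)%nat -> leM (mi_abs n alpha) M ->
     exists c d, DXi n l alpha a c /\ DX n l beta c d /\ continuous_R2n n l d) /\
  (forall alpha, leM (mi_abs n alpha) M ->
     exists C c, DXi n l alpha a c /\
       forall x xi, inRn n x -> inRn n xi ->
         opnorm_le l (c x xi) (C * Rpower (jb n xi) (m - rho * INR (mi_abs n alpha)))) /\
  (forall alpha, leM (mi_abs n alpha) M ->
     exists C c, DXi n l alpha a c /\
       forall xi, inRn n xi ->
         holder_le n l mt tau (fun x => c x xi)
           (C * Rpower (jb n xi) (m - rho * INR (mi_abs n alpha) + delta * (INR mt + tau)))).

From Stdlib Require Import Reals List Lra Lia Psatz FunctionalExtensionality.
Open Scope R_scope.

(* The xi-derivatives of a(x, .) at two far points x, x' are compared by induction on |alpha|.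
   Along a line xi + t e_j, a Landau-type interpolation bounds the first derivative on
   [0, r] by the function itself (small, by induction) and the second derivative (of order
   |alpha| + 2 <= n + 4 <= M, hence bounded by the symbol estimate); the choice
   r = h <xi>^rho turns this into the gain <xi>^(-rho).  Thus d_xi^alpha a(x, xi) is
   uniformly Cauchy as |x| -> oo in the weight <xi>^(m - rho |alpha|), and the pointwise
   limit identifies its limit with d_xi^alpha a(oo, xi). *)

Lemma rsum_ext k f g : (forall i, (i < k)%nat -> f i = g i) -> rsum k f = rsum k g.
Proof.
  induction k; simpl; intros H; [reflexivity|].
  rewrite IHk, H by (auto; lia). reflexivity.
Qed.

Lemma rsum_le k f g : (forall i, (i < k)%nat -> f i <= g i) -> rsum k f <= rsum k g.
Proof.
  induction k; simpl; intros H; [lra|].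
  pose proof (IHk ltac:(intros; apply H; lia)). pose proof (H k ltac:(lia)). lra.
Qed.

Lemma rsum_nonneg k f : (forall i, 0 <= f i) -> 0 <= rsum k f.
Proof. induction k; simpl; intros H; [lra|]. pose proof (IHk H). pose proof (H k). lra. Qed.

Lemma rsum_ge_term k f i : (forall i, 0 <= f i) -> (i < k)%nat -> f i <= rsum k f.
Proof.
  induction k; simpl; intros H Hi; [lia|].
  destruct (Nat.eq_dec i k) as [->|ne].
  - pose proof (rsum_nonneg k f H). lra.
  - pose proof (IHk H ltac:(lia)). pose proof (H k). lra.
Qed.

Lemma rsum_const k c : rsum k (fun _ => c) = INR k * c.
Proof. induction k; cbn [rsum]; [simpl; lra|]. rewrite IHk, S_INR. ring. Qed.

Lemma rsum_plus k f g : rsum k (fun i => f i + g i) = rsum k f + rsum k g.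
Proof. induction k; simpl; [lra|]. rewrite IHk. ring. Qed.

Lemma rsum_scal k c f : rsum k (fun i => c * f i) = c * rsum k f.
Proof. induction k; simpl; [lra|]. rewrite IHk. ring. Qed.

Lemma rsum_delta k f j : (j < k)%nat -> (forall i, i <> j -> f i = 0) -> rsum k f = f j.
Proof.
  induction k; simpl; intros Hj H; [lia|].
  destruct (Nat.eq_dec j k) as [->|ne].
  - rewrite (rsum_ext k f (fun _ => 0)), rsum_const by (intros; apply H; lia). lra.
  - rewrite IHk, (H k) by (auto; lia). lra.
Qed.

Lemma rsum_sq_le k f : (rsum k f) ^ 2 <= INR k * rsum k (fun i => f i ^ 2).
Proof.
  induction k; cbn [rsum]; [simpl; lra|].
  set (S := rsum k f) in *. set (Q := rsum k (fun i => f i ^ 2)) in *. set (y := f k).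
  rewrite S_INR. assert (0 <= Q) by (apply rsum_nonneg; intros; nra).
  pose proof (pos_INR k).
  assert (2 * S * y <= Q + INR k * y ^ 2).
  { destruct (Req_dec (INR k) 0) as [e|e].
    - rewrite e in IHk. assert (S = 0) by nra. subst S. nra.
    - pose proof (pow2_ge_0 (S - INR k * y)).
      apply Rmult_le_reg_l with (INR k); nra. }
  nra.
Qed.

Lemma csum_fst k f : fst (csum k f) = rsum k (fun i => fst (f i)).
Proof. induction k; simpl; [reflexivity|]. rewrite IHk; reflexivity. Qed.

Lemma csum_snd k f : snd (csum k f) = rsum k (fun i => snd (f i)).
Proof. induction k; simpl; [reflexivity|]. rewrite IHk; reflexivity. Qed.

(* Real and imaginary part, indexed by a boolean so that both are handled at once. *)
Definition cproj (b : bool) (z : Cx) : R := if b then fst z else snd z.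

Lemma cproj_inj z w : (forall b, cproj b z = cproj b w) -> z = w.
Proof. intros H. destruct z, w. f_equal; [apply (H true) | apply (H false)]. Qed.

Lemma cproj_msub b A B i k : cproj b (msub A B i k) = cproj b (A i k) - cproj b (B i k).
Proof. now destruct b. Qed.

Lemma Rabs_cproj_le b z : Rabs (cproj b z) <= sqrt (cabs2 z).
Proof.
  rewrite <- (sqrt_pow2 (Rabs _)) by apply Rabs_pos. rewrite pow2_abs.
  apply sqrt_le_1_alt. destruct b, z; unfold cabs2; simpl; nra.
Qed.

Lemma cabs2_cmul z w : cabs2 (cmul z w) = cabs2 z * cabs2 w.
Proof. destruct z, w. unfold cabs2, cmul; simpl. ring. Qed.

Lemma cabs2_csum_le k f : cabs2 (csum k f) <= INR k * rsum k (fun i => cabs2 (f i)).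
Proof.
  unfold cabs2. rewrite csum_fst, csum_snd, rsum_plus.
  pose proof (rsum_sq_le k (fun i => fst (f i))).
  pose proof (rsum_sq_le k (fun i => snd (f i))). lra.
Qed.

Definition entry_le (l : nat) (A : Mat) (d : R) : Prop :=
  forall b i k, (i < l)%nat -> (k < l)%nat -> Rabs (cproj b (A i k)) <= d.

Lemma cabs2_le_entry_le l A d i k : entry_le l A d -> (i < l)%nat -> (k < l)%nat ->
  cabs2 (A i k) <= 2 * d ^ 2.
Proof.
  intros H Hi Hk.
  assert (Hsq : forall b, cproj b (A i k) ^ 2 <= d ^ 2).
  { intros b. rewrite <- pow2_abs. apply pow_incr. split; [apply Rabs_pos | apply H; auto]. }
  pose proof (Hsq true). pose proof (Hsq false). unfold cabs2. simpl in *. lra.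
Qed.

Definition cunit (k : nat) : cvec := fun k' => if Nat.eqb k' k then (1, 0) else (0, 0).

Lemma cvnorm_cunit l k : (k < l)%nat -> cvnorm l (cunit k) = 1.
Proof.
  intros Hk. unfold cvnorm. rewrite (rsum_delta l _ k Hk).
  - unfold cunit. rewrite Nat.eqb_refl. unfold cabs2; simpl.
    replace (1 * (1 * 1) + 0 * (0 * 1)) with 1 by ring. apply sqrt_1.
  - intros i ne. unfold cunit. apply Nat.eqb_neq in ne. rewrite ne. unfold cabs2; simpl. ring.
Qed.

Lemma matvec_cunit l A i k : (k < l)%nat -> matvec l A (cunit k) i = A i k.
Proof.
  intros Hk. unfold matvec. rewrite (surjective_pairing (csum _ _)), csum_fst, csum_snd.
  rewrite !(rsum_delta l _ k Hk).
  - unfold cunit. rewrite Nat.eqb_refl. destruct (A i k); simpl. f_equal; ring.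
  - intros i' ne. unfold cunit. apply Nat.eqb_neq in ne. rewrite ne. simpl. ring.
  - intros i' ne. unfold cunit. apply Nat.eqb_neq in ne. rewrite ne. simpl. ring.
Qed.

Lemma opnorm_entry_le l A c : opnorm_le l A c -> entry_le l A c.
Proof.
  intros H b i k Hi Hk. specialize (H (cunit k)).
  rewrite cvnorm_cunit, Rmult_1_r in H by exact Hk.
  rewrite <- (matvec_cunit l A i k Hk).
  eapply Rle_trans; [apply Rabs_cproj_le|]. eapply Rle_trans; [|exact H].
  apply sqrt_le_1_alt. apply (rsum_ge_term l (fun i => cabs2 (matvec l A (cunit k) i))); auto.
  intros; unfold cabs2; nra.
Qed.

Lemma entry_le_opnorm l A d : 0 <= d -> entry_le l A d -> opnorm_le l A (2 * INR l * d).
Proof.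
  intros Hd H v. unfold cvnorm.
  set (S := rsum l (fun i => cabs2 (v i))).
  assert (HS : 0 <= S) by (apply rsum_nonneg; intros; unfold cabs2; nra).
  assert (Hrow : forall i, (i < l)%nat -> cabs2 (matvec l A v i) <= INR l * (2 * d ^ 2 * S)).
  { intros i Hi. eapply Rle_trans; [apply cabs2_csum_le|].
    apply Rmult_le_compat_l; [apply pos_INR|]. unfold S. rewrite <- rsum_scal.
    apply rsum_le. intros k Hk. rewrite cabs2_cmul.
    apply Rmult_le_compat_r; [unfold cabs2; nra | apply (cabs2_le_entry_le l); auto]. }
  pose proof (pos_INR l).
  rewrite <- (sqrt_pow2 (2 * INR l * d)) by nra. rewrite <- sqrt_mult_alt by nra.
  apply sqrt_le_1_alt. eapply Rle_trans; [apply rsum_le; exact Hrow|].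
  rewrite rsum_const. assert (0 <= INR l * INR l * (d ^ 2 * S)) by (apply Rmult_le_pos; nra).
  nra.
Qed.

Definition vshift (y : vec) (t : R) (j : nat) : vec := vadd y (vscale t (ej j)).

Lemma inRn_vshift n y t j : inRn n y -> (j < n)%nat -> inRn n (vshift y t j).
Proof.
  intros H Hj i Hi. unfold vshift, vadd, vscale, ej. rewrite H by auto.
  destruct (Nat.eqb_spec i j); [lia | ring].
Qed.

Lemma vshift_vshift y t s j : vshift (vshift y t j) s j = vshift y (t + s) j.
Proof. apply functional_extensionality; intro i. unfold vshift, vadd, vscale. ring. Qed.

Lemma vshift0 y j : vshift y 0 j = y.
Proof. apply functional_extensionality; intro i. unfold vshift, vadd, vscale. ring. Qed.

Lemma vnorm_sq n y : vnorm n y ^ 2 = rsum n (fun i => y i ^ 2).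
Proof. unfold vnorm. apply pow2_sqrt. apply rsum_nonneg; intros; nra. Qed.

Lemma vnorm_sq_vshift n y t j : (j < n)%nat ->
  vnorm n (vshift y t j) ^ 2 = vnorm n y ^ 2 + 2 * t * y j + t ^ 2.
Proof.
  rewrite !vnorm_sq. induction n; intros Hj; [lia|]. cbn [rsum].
  destruct (Nat.eq_dec j n) as [->|ne].
  - rewrite (rsum_ext n _ (fun i => y i ^ 2)).
    + unfold vshift, vadd, vscale, ej. rewrite Nat.eqb_refl. ring.
    + intros i Hi. unfold vshift, vadd, vscale, ej. destruct (Nat.eqb_spec i n); [lia | ring].
  - rewrite IHn by lia. unfold vshift, vadd, vscale, ej. destruct (Nat.eqb_spec n j); [lia|]. ring.
Qed.

Lemma exists_far_point n R0 : (1 <= n)%nat -> exists x, inRn n x /\ R0 <= vnorm n x.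
Proof.
  intros Hn. exists (vshift (fun _ => 0) (Rabs R0) 0). split.
  - apply inRn_vshift; [intros i _; reflexivity | lia].
  - assert (Hz : vnorm n (fun _ => 0) = 0).
    { unfold vnorm. rewrite rsum_const. replace (INR n * 0 ^ 2) with 0 by ring. apply sqrt_0. }
    pose proof (vnorm_sq_vshift n (fun _ => 0) (Rabs R0) 0 Hn) as E. rewrite Hz in E.
    assert (0 <= vnorm n (vshift (fun _ => 0) (Rabs R0) 0)) by apply sqrt_pos.
    pose proof (Rle_abs R0). pose proof (Rabs_pos R0). nra.
Qed.

Lemma jb_sq n y : jb n y ^ 2 = 1 + vnorm n y ^ 2.
Proof. unfold jb. apply pow2_sqrt. nra. Qed.

Lemma jb_ge1 n y : 1 <= jb n y.
Proof.
  unfold jb. rewrite <- sqrt_1 at 1. apply sqrt_le_1_alt.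
  pose proof (pow2_ge_0 (vnorm n y)). lra.
Qed.

Lemma jb_vshift n y t j : (j < n)%nat -> 0 <= t <= jb n y / 2 ->
  jb n y / 2 <= jb n (vshift y t j) <= 2 * jb n y.
Proof.
  intros Hj Ht.
  pose proof (jb_sq n (vshift y t j)) as E1. rewrite vnorm_sq_vshift in E1 by exact Hj.
  pose proof (jb_sq n y) as E2. rewrite vnorm_sq in E1, E2.
  pose proof (rsum_ge_term n (fun i => y i ^ 2) j ltac:(intros; nra) Hj) as E3. cbv beta in E3.
  pose proof (jb_ge1 n y). pose proof (jb_ge1 n (vshift y t j)).
  set (J := jb n y) in *. set (Y := jb n (vshift y t j)) in *.
  assert (- J <= y j <= J) by (split; nra).
  assert (Y ^ 2 <= (J + t) ^ 2) by nra.
  assert ((J - t) ^ 2 <= Y ^ 2) by nra.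
  split; nra.
Qed.

Lemma Rpower_le_of_between J Y p : 0 < J -> J / 2 <= Y <= 2 * J ->
  Rpower Y p <= Rpower 2 (Rabs p) * Rpower J p.
Proof.
  intros HJ HY. unfold Rpower. rewrite <- exp_plus.
  assert (ln Y <= ln 2 + ln J).
  { rewrite <- ln_mult by lra. destruct (Req_dec Y (2 * J)) as [->|]; [lra|].
    left. apply ln_increasing; lra. }
  assert (ln J - ln 2 <= ln Y).
  { replace (ln J - ln 2) with (ln (J / 2)) by (unfold Rdiv; rewrite ln_mult, ln_Rinv by lra; ring).
    destruct (Req_dec Y (J / 2)) as [->|]; [lra|]. left. apply ln_increasing; lra. }
  pose proof ln_lt_2.
  assert (p * ln Y <= Rabs p * ln 2 + p * ln J).
  { destruct (Rle_or_lt 0 p); [rewrite Rabs_pos_eq | rewrite Rabs_left]; nra. }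
  destruct (Req_dec (p * ln Y) (Rabs p * ln 2 + p * ln J)) as [->|]; [lra|].
  left. apply exp_increasing. lra.
Qed.

Lemma Rpower_jb_vshift n xi t j p : (j < n)%nat -> 0 <= t <= jb n xi / 2 ->
  Rpower (jb n (vshift xi t j)) p <= Rpower 2 (Rabs p) * Rpower (jb n xi) p.
Proof.
  intros Hj Ht. apply Rpower_le_of_between; [pose proof (jb_ge1 n xi); lra|].
  apply jb_vshift; auto.
Qed.

Lemma Landau_deriv_bound (phi psi chi : R -> R) r A B : 0 < r ->
  (forall t, 0 <= t <= r -> derivable_pt_lim phi t (psi t)) ->
  (forall t, 0 <= t <= r -> derivable_pt_lim psi t (chi t)) ->
  (forall t, 0 <= t <= r -> Rabs (phi t) <= A) ->
  (forall t, 0 <= t <= r -> Rabs (chi t) <= B) ->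
  Rabs (psi 0) <= 2 * A / r + r * B.
Proof.
  intros Hr D1 D2 HA HB.
  destruct (MVT_cor2 phi psi 0 r Hr ltac:(intros; apply D1; lra)) as [s [Es Hs]].
  destruct (MVT_cor2 psi chi 0 s ltac:(lra) ltac:(intros; apply D2; lra)) as [u [Eu Hu]].
  pose proof (HA r ltac:(lra)). pose proof (HA 0 ltac:(lra)). pose proof (HB u ltac:(lra)).
  assert (Hs_bound : Rabs (psi s) * r <= 2 * A).
  { rewrite <- (Rabs_pos_eq r), <- Rabs_mult by lra.
    replace (psi s * r) with (phi r - phi 0) by lra.
    unfold Rminus. eapply Rle_trans; [apply Rabs_triang|]. rewrite Rabs_Ropp. lra. }
  assert (Rabs (psi s) <= 2 * A / r).
  { apply Rmult_le_reg_r with r; auto. unfold Rdiv. rewrite Rmult_assoc, Rinv_l by lra. lra. }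
  assert (Rabs (chi u * (s - 0)) <= r * B).
  { rewrite Rabs_mult, (Rabs_pos_eq (s - 0)) by lra. pose proof (Rabs_pos (chi u)). nra. }
  replace (psi 0) with (psi s - chi u * (s - 0)) by lra.
  unfold Rminus at 1. eapply Rle_trans; [apply Rabs_triang|]. rewrite Rabs_Ropp. lra.
Qed.

(* Interpolating on [0, h <xi>^rho] trades the loss [<xi>^(-2 rho)] of the second derivative
   against the gain [<xi>^rho] of the first one. *)
Lemma Landau_deriv_bound_weighted (phi psi chi : R -> R) J h e B p rho :
  1 <= J -> 0 <= rho <= 1 -> 0 < h <= 1 / 2 ->
  (forall t, 0 <= t <= J / 2 -> derivable_pt_lim phi t (psi t)) ->
  (forall t, 0 <= t <= J / 2 -> derivable_pt_lim psi t (chi t)) ->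
  (forall t, 0 <= t <= J / 2 -> Rabs (phi t) <= e * Rpower J p) ->
  (forall t, 0 <= t <= J / 2 -> Rabs (chi t) <= B * Rpower J (p - 2 * rho)) ->
  Rabs (psi 0) <= (2 * e / h + h * B) * Rpower J (p - rho).
Proof.
  intros HJ Hrho Hh D1 D2 H1 H2.
  set (Q := Rpower J rho). set (P := Rpower J (p - rho)).
  assert (HQ : 0 < Q) by apply exp_pos.
  assert (HQJ : Q <= J) by (unfold Q; rewrite <- (Rpower_1 J) at 2 by lra; apply Rle_Rpower; lra).
  assert (EJp : Rpower J p = P * Q) by (unfold P, Q; rewrite <- Rpower_plus; f_equal; ring).
  assert (EJq : Rpower J (p - 2 * rho) * Q = P)
    by (unfold P, Q; rewrite <- Rpower_plus; f_equal; ring).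
  set (r := h * Q).
  assert (Hr : 0 < r) by (unfold r; nra). assert (HrJ : r <= J / 2) by (unfold r; nra).
  eapply Rle_trans.
  - apply (Landau_deriv_bound phi psi chi r (e * Rpower J p) (B * Rpower J (p - 2 * rho)) Hr);
      intros t Ht;
      [apply D1 | apply D2 | apply H1 | apply H2]; lra.
  - rewrite EJp. replace (2 * (e * (P * Q)) / r) with (2 * e / h * P) by (unfold r; field; lra).
    replace (r * (B * Rpower J (p - 2 * rho))) with (h * B * P) by (rewrite <- EJq; unfold r; ring).
    lra.
Qed.

Lemma derivable_pt_lim_of_translate (f : R -> R) t d :
  derivable_pt_lim (fun s => f (t + s)) 0 d -> derivable_pt_lim f t d.
Proof.
  intros H eps He. destruct (H eps He) as [del Hd]. exists del. intros s Hs Hsd.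
  specialize (Hd s Hs Hsd). rewrite Rplus_0_l, Rplus_0_r in Hd. exact Hd.
Qed.

Definition eqon (n l : nat) (F F' : vec -> Mat) : Prop :=
  forall y, inRn n y -> forall i k, (i < l)%nat -> (k < l)%nat -> F y i k = F' y i k.

Lemma has_partial_cproj n l j F G y b i k : has_partial n l j F G -> inRn n y ->
  (i < l)%nat -> (k < l)%nat ->
  derivable_pt_lim (fun t => cproj b (F (vshift y t j) i k)) 0 (cproj b (G y i k)).
Proof. intros H Hy Hi Hk. destruct (H y Hy i k Hi Hk). destruct b; assumption. Qed.

Lemma has_partial_of_cproj n l j F G :
  (forall y b i k, inRn n y -> (i < l)%nat -> (k < l)%nat ->
     derivable_pt_lim (fun t => cproj b (F (vshift y t j) i k)) 0 (cproj b (G y i k))) ->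
  has_partial n l j F G.
Proof. intros H y Hy i k Hi Hk. exact (conj (H y true i k Hy Hi Hk) (H y false i k Hy Hi Hk)). Qed.

Lemma eqon_line n l j F F' y b i k : (j < n)%nat -> eqon n l F F' -> inRn n y ->
  (i < l)%nat -> (k < l)%nat ->
  (fun t => cproj b (F (vshift y t j) i k)) = (fun t => cproj b (F' (vshift y t j) i k)).
Proof.
  intros Hj E Hy Hi Hk. apply functional_extensionality; intro t.
  rewrite E by (auto; apply inRn_vshift; auto). reflexivity.
Qed.

Lemma has_partial_uniq n l j F F' G G' : (j < n)%nat ->
  has_partial n l j F G -> has_partial n l j F' G' -> eqon n l F F' -> eqon n l G G'.
Proof.
  intros Hj H H' E y Hy i k Hi Hk. apply cproj_inj; intro b.
  pose proof (has_partial_cproj n l j F G y b i k H Hy Hi Hk) as D.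
  rewrite (eqon_line n l j F F' y b i k Hj E Hy Hi Hk) in D.
  exact (uniqueness_limite _ _ _ _ D (has_partial_cproj n l j F' G' y b i k H' Hy Hi Hk)).
Qed.

Lemma has_partial_eqon n l j F F' G G' : (j < n)%nat ->
  has_partial n l j F G -> eqon n l F F' -> eqon n l G G' -> has_partial n l j F' G'.
Proof.
  intros Hj H E EG. apply (has_partial_of_cproj n l). intros y b i k Hy Hi Hk.
  rewrite <- (eqon_line n l j F F' y b i k Hj E Hy Hi Hk), <- EG by auto.
  exact (has_partial_cproj n l j F G y b i k H Hy Hi Hk).
Qed.

Lemma has_iter_uniq n l ds : Forall (fun j => (j < n)%nat) ds -> forall F F' G G',
  has_iter n l ds F G -> has_iter n l ds F' G' -> eqon n l F F' -> eqon n l G G'.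
Proof.
  induction ds as [|j ds IH]; intros Hds F F' G G' H H' E; simpl in *.
  - intros y Hy i k Hi Hk. rewrite H, H' by auto. apply E; auto.
  - inversion Hds; subst. destruct H as [D [PD ID]]. destruct H' as [D' [PD' ID']].
    apply (IH ltac:(assumption) D D'); auto. apply (has_partial_uniq n l j F F'); auto.
Qed.

Lemma has_iter_app n l ds ds' F G : has_iter n l (ds ++ ds') F G ->
  exists H, has_iter n l ds F H /\ has_iter n l ds' H G.
Proof.
  revert F. induction ds as [|j ds IH]; intros F HG; simpl in *.
  - exists F. split; auto.
  - destruct HG as [F' [P I]]. destruct (IH F' I) as [H [I1 I2]].
    exists H. split; [exists F'; auto | exact I2].
Qed.

Lemma has_iter_snoc_partial n l ds j F H G :
  Forall (fun i => (i < n)%nat) ds -> (j < n)%nat ->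
  has_iter n l ds F H -> has_iter n l (ds ++ j :: nil) F G -> has_partial n l j H G.
Proof.
  intros Hds Hj IH IG. destruct (has_iter_app n l ds (j :: nil) F G IG) as [H' [I1 [G' [P E]]]].
  apply (has_partial_eqon n l j H' H G' G Hj P).
  - exact (has_iter_uniq n l ds Hds F F H' H I1 IH (fun y _ i k _ _ => eq_refl)).
  - intros y Hy i k Hi Hk. symmetry. apply E; auto.
Qed.

Section MultiIndices.
Local Open Scope nat_scope.

Lemma mi_list_S n alpha : mi_list (S n) alpha = mi_list n alpha ++ repeat n (alpha n).
Proof. unfold mi_list. rewrite seq_S, flat_map_app. simpl. rewrite app_nil_r. reflexivity. Qed.

Lemma mi_abs_S n alpha : mi_abs (S n) alpha = mi_abs n alpha + alpha n.
Proof.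
  unfold mi_abs. rewrite seq_S, map_app, fold_right_app. simpl.
  generalize (map alpha (seq 0 n)). induction l; simpl; lia.
Qed.

Lemma mi_list_ext n alpha beta : (forall i, i < n -> alpha i = beta i) ->
  mi_list n alpha = mi_list n beta.
Proof.
  induction n; intros H; [reflexivity|].
  rewrite !mi_list_S, IHn, H by (auto; lia). reflexivity.
Qed.

Lemma mi_abs_ext n alpha beta : (forall i, i < n -> alpha i = beta i) ->
  mi_abs n alpha = mi_abs n beta.
Proof.
  induction n; intros H; [reflexivity|].
  rewrite !mi_abs_S, IHn, H by (auto; lia). reflexivity.
Qed.

Lemma mi_list_lt n alpha : Forall (fun j => j < n) (mi_list n alpha).
Proof.
  apply Forall_forall. intros x Hx. unfold mi_list in Hx. apply in_flat_map in Hx.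
  destruct Hx as [i [Hi Hx]]. apply repeat_spec in Hx. apply in_seq in Hi. lia.
Qed.

Lemma mi_list_abs0 n alpha : mi_abs n alpha = 0 -> mi_list n alpha = nil.
Proof.
  induction n; intros H; [reflexivity|]. rewrite mi_abs_S in H.
  rewrite mi_list_S, IHn by lia. replace (alpha n) with 0 by lia. reflexivity.
Qed.

Lemma mi_last_nonzero n alpha : 0 < mi_abs n alpha ->
  exists j, j < n /\ 0 < alpha j /\ forall i, j < i < n -> alpha i = 0.
Proof.
  induction n; intros H; [unfold mi_abs in H; simpl in H; lia|]. rewrite mi_abs_S in H.
  destruct (Nat.eq_dec (alpha n) 0) as [e|e].
  - destruct (IHn ltac:(lia)) as [j [Hj [Hpos Htop]]]. exists j.
    split; [lia|]. split; [exact Hpos|].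
    intros i Hi. destruct (Nat.eq_dec i n) as [->|]; auto. apply Htop; lia.
  - exists n. repeat split; lia.
Qed.

Definition mi_succ (alpha : nat -> nat) (j : nat) : nat -> nat :=
  fun i => if Nat.eqb i j then S (alpha j) else alpha i.

Lemma mi_succ_top n alpha j : j < n -> (forall i, j < i < n -> alpha i = 0) ->
  mi_list n (mi_succ alpha j) = mi_list n alpha ++ j :: nil /\
  mi_abs n (mi_succ alpha j) = S (mi_abs n alpha).
Proof.
  induction n; intros Hj H; [lia|]. rewrite !mi_list_S, !mi_abs_S.
  destruct (Nat.eq_dec j n) as [->|ne].
  - rewrite (mi_list_ext n (mi_succ alpha n) alpha), (mi_abs_ext n (mi_succ alpha n) alpha).
    2,3: intros i Hi; unfold mi_succ; destruct (Nat.eqb_spec i n); [lia | reflexivity].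
    unfold mi_succ. rewrite Nat.eqb_refl. simpl. rewrite <- app_assoc, repeat_cons.
    split; [reflexivity | lia].
  - destruct (IHn ltac:(lia) ltac:(intros; apply H; lia)) as [E1 E2]. rewrite E1, E2.
    assert (mi_succ alpha j n = 0) as ->.
    { unfold mi_succ. destruct (Nat.eqb_spec n j); [lia|]. apply H; lia. }
    rewrite (H n) by lia. simpl. rewrite !app_nil_r. split; [reflexivity | lia].
Qed.

Lemma mi_split_last n alpha k : mi_abs n alpha = S k -> exists j alpha',
  j < n /\ mi_abs n alpha' = k /\
  mi_list n alpha = mi_list n alpha' ++ j :: nil /\
  mi_list n (mi_succ alpha j) = mi_list n alpha ++ j :: nil /\
  mi_abs n (mi_succ alpha j) = S (S k).
Proof.
  intros H. destruct (mi_last_nonzero n alpha ltac:(lia)) as [j [Hj [Hpos Htop]]].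
  set (alpha' := fun i => if Nat.eqb i j then pred (alpha j) else alpha i).
  assert (Htop' : forall i, j < i < n -> alpha' i = 0).
  { intros i Hi. unfold alpha'. destruct (Nat.eqb_spec i j); [lia | auto]. }
  assert (Esucc : mi_succ alpha' j = alpha).
  { apply functional_extensionality; intro i. unfold mi_succ, alpha'. rewrite Nat.eqb_refl.
    destruct (Nat.eqb_spec i j); [subst; lia | reflexivity]. }
  destruct (mi_succ_top n alpha' j Hj Htop') as [E1 E2]. rewrite Esucc in E1, E2.
  destruct (mi_succ_top n alpha j Hj Htop) as [F1 F2].
  exists j, alpha'. repeat split; auto; lia.
Qed.

Lemma leM_le k k' M : k <= k' -> leM k' M -> leM k M.
Proof. destruct M; simpl; lia. Qed.

End MultiIndices.

Definition xi_partial (n l j : nat) (U V : vec -> vec -> Mat) : Prop :=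
  forall x, inRn n x -> has_partial n l j (U x) (V x).

Lemma xi_partial_line n l j U V x xi b i k t : (j < n)%nat -> xi_partial n l j U V ->
  inRn n x -> inRn n xi -> (i < l)%nat -> (k < l)%nat ->
  derivable_pt_lim (fun s => cproj b (U x (vshift xi s j) i k)) t
    (cproj b (V x (vshift xi t j) i k)).
Proof.
  intros Hj D Hx Hxi Hi Hk. apply derivable_pt_lim_of_translate.
  rewrite (functional_extensionality (fun s => cproj b (U x (vshift xi (t + s) j) i k))
             (fun s => cproj b (U x (vshift (vshift xi t j) s j) i k)))
    by (intro s; rewrite vshift_vshift; reflexivity).
  apply (has_partial_cproj n l); [apply D | apply inRn_vshift |..]; auto.
Qed.

Definition cauchy_at_infinity (n l : nat) (U : vec -> vec -> Mat) (p : R) : Prop :=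
  forall eps, 0 < eps -> exists R0, forall x x', inRn n x -> inRn n x' ->
    R0 <= vnorm n x -> R0 <= vnorm n x' -> forall xi, inRn n xi ->
    entry_le l (msub (U x xi) (U x' xi)) (eps * Rpower (jb n xi) p).

Lemma cauchy_at_infinity_ext n l U V p :
  (forall x xi, inRn n x -> inRn n xi -> forall i k, (i < l)%nat -> (k < l)%nat ->
     V x xi i k = U x xi i k) ->
  cauchy_at_infinity n l U p -> cauchy_at_infinity n l V p.
Proof.
  intros E HU eps He. destruct (HU eps He) as [R0 HR]. exists R0.
  intros x x' Hx Hx' Rx Rx' xi Hxi b i k Hi Hk.
  rewrite cproj_msub, !E by auto. rewrite <- cproj_msub. apply HR; auto.
Qed.

Lemma cauchy_at_infinity_of_limit n l U Uinf p :
  (forall eps, 0 < eps -> exists R0, forall x, inRn n x -> R0 <= vnorm n x ->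
     forall xi, inRn n xi -> opnorm_le l (msub (U x xi) (Uinf xi)) (eps * Rpower (jb n xi) p)) ->
  cauchy_at_infinity n l U p.
Proof.
  intros H eps He. destruct (H (eps / 2) ltac:(lra)) as [R0 HR]. exists R0.
  intros x x' Hx Hx' Rx Rx' xi Hxi b i k Hi Hk.
  pose proof (opnorm_entry_le _ _ _ (HR x Hx Rx xi Hxi) b i k Hi Hk) as B1.
  pose proof (opnorm_entry_le _ _ _ (HR x' Hx' Rx' xi Hxi) b i k Hi Hk) as B2.
  rewrite cproj_msub in *.
  replace (cproj b (U x xi i k) - cproj b (U x' xi i k))
    with ((cproj b (U x xi i k) - cproj b (Uinf xi i k))
          - (cproj b (U x' xi i k) - cproj b (Uinf xi i k))) by ring.
  eapply Rle_trans; [apply Rabs_triang|]. rewrite Rabs_Ropp. lra.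
Qed.

Lemma interpolation_step_exists eps B : 0 < eps -> 0 < B ->
  exists h, 0 < h <= 1 / 2 /\ h * B <= eps / 2.
Proof.
  intros He HB. exists (Rmin (1 / 2) (eps / (2 * B))). split.
  - split; [apply Rmin_glb_lt; [lra | apply Rdiv_lt_0_compat; lra] | apply Rmin_l].
  - apply Rle_trans with (eps / (2 * B) * B).
    + apply Rmult_le_compat_r; [lra | apply Rmin_r].
    + right. field. lra.
Qed.

Lemma cauchy_at_infinity_xi_partial n l j U V W p rho C :
  (j < n)%nat -> 0 <= rho <= 1 -> xi_partial n l j U V -> xi_partial n l j V W ->
  (forall x xi, inRn n x -> inRn n xi ->
     entry_le l (W x xi) (C * Rpower (jb n xi) (p - 2 * rho))) ->
  cauchy_at_infinity n l U p -> cauchy_at_infinity n l V (p - rho).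
Proof.
  intros Hj Hrho DU DV HW HU eps He.
  set (K := Rpower 2 (Rabs p)). set (B := 2 * (Rabs C + 1) * Rpower 2 (Rabs (p - 2 * rho))).
  assert (HK : 0 < K) by apply exp_pos.
  assert (HB : 0 < B) by (pose proof (Rabs_pos C); pose proof (exp_pos (Rabs (p - 2 * rho) * ln 2));
                          unfold B, Rpower; nra).
  destruct (interpolation_step_exists eps B He HB) as [h [Hh HhB]].
  (* [e] and [h] make both terms of the weighted Landau bound at most [eps / 2]. *)
  set (e := eps * h / 4).
  destruct (HU (e / K) ltac:(unfold e; apply Rdiv_lt_0_compat; nra)) as [R0 HR].
  exists R0. intros x x' Hx Hx' Rx Rx' xi Hxi b i k Hi Hk.
  set (J := jb n xi). assert (HJ : 1 <= J) by apply jb_ge1.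
  set (line := fun (F : vec -> vec -> Mat) t =>
    cproj b (F x (vshift xi t j) i k) - cproj b (F x' (vshift xi t j) i k)).
  assert (Dline : forall F G, xi_partial n l j F G ->
            forall t, derivable_pt_lim (line F) t (line G t)).
  { intros F G D t. apply derivable_pt_lim_minus; apply (xi_partial_line n l); auto. }
  assert (Hsh : forall t, 0 <= t <= J / 2 -> inRn n (vshift xi t j))
    by (intros; apply inRn_vshift; auto).
  assert (HlineU : forall t, 0 <= t <= J / 2 -> Rabs (line U t) <= e * Rpower J p).
  { intros t Ht. unfold line. rewrite <- cproj_msub.
    eapply Rle_trans; [apply HR; auto|].
    replace (e * Rpower J p) with (e / K * (K * Rpower J p)) by (field; lra).
    apply Rmult_le_compat_l; [unfold e; apply Rlt_le, Rdiv_lt_0_compat; nra |].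
    apply Rpower_jb_vshift; auto. }
  assert (HlineW : forall t, 0 <= t <= J / 2 -> Rabs (line W t) <= B * Rpower J (p - 2 * rho)).
  { intros t Ht. unfold line.
    eapply Rle_trans; [unfold Rminus at 1; apply Rabs_triang|]. rewrite Rabs_Ropp.
    pose proof (HW x _ Hx (Hsh t Ht) b i k Hi Hk). pose proof (HW x' _ Hx' (Hsh t Ht) b i k Hi Hk).
    assert (C * Rpower (jb n (vshift xi t j)) (p - 2 * rho)
            <= (Rabs C + 1) * (Rpower 2 (Rabs (p - 2 * rho)) * Rpower J (p - 2 * rho))).
    { pose proof (exp_pos ((p - 2 * rho) * ln (jb n (vshift xi t j)))).
      apply Rle_trans with ((Rabs C + 1) * Rpower (jb n (vshift xi t j)) (p - 2 * rho));
        [pose proof (Rle_abs C); unfold Rpower; nra|].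
      apply Rmult_le_compat_l; [pose proof (Rabs_pos C); lra|]. apply Rpower_jb_vshift; auto. }
    unfold B. lra. }
  assert (HV := Landau_deriv_bound_weighted (line U) (line V) (line W) J h e B p rho HJ Hrho Hh
                  (fun t _ => Dline U V DU t) (fun t _ => Dline V W DV t) HlineU HlineW).
  unfold line in HV. rewrite vshift0 in HV. rewrite cproj_msub.
  eapply Rle_trans; [exact HV|]. apply Rmult_le_compat_r; [apply Rlt_le, exp_pos|].
  replace (2 * e / h) with (eps / 2) by (unfold e; field; lra). lra.
Qed.

Lemma cauchy_at_infinity_xi_derivatives n l m rho M a ainf0 :
  0 <= rho <= 1 -> leM (n + 4) M ->
  (forall alpha, leM (mi_abs n alpha) M ->
     exists C c, DXi n l alpha a c /\
       forall x xi, inRn n x -> inRn n xi ->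
         opnorm_le l (c x xi) (C * Rpower (jb n xi) (m - rho * INR (mi_abs n alpha)))) ->
  (forall eps, 0 < eps -> exists R0, forall x, inRn n x -> R0 <= vnorm n x ->
     forall xi, inRn n xi -> opnorm_le l (msub (a x xi) (ainf0 xi)) (eps * Rpower (jb n xi) m)) ->
  forall alpha G, (mi_abs n alpha <= n + 2)%nat -> DXi n l alpha a G ->
  cauchy_at_infinity n l G (m - rho * INR (mi_abs n alpha)).
Proof.
  intros Hrho HM Hbound Hlim alpha G Ha DG. remember (mi_abs n alpha) as k eqn:Hk.
  revert alpha G Hk Ha DG. induction k as [|k IH]; intros alpha G Hk Ha DG.
  - replace (m - rho * INR 0) with m by (simpl; ring).
    apply (cauchy_at_infinity_ext n l a); [|exact (cauchy_at_infinity_of_limit n l a ainf0 m Hlim)].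
    intros x xi Hx Hxi i k' Hi Hk'. pose proof (DG x Hx) as D. unfold Dv in D.
    rewrite mi_list_abs0 in D by auto. apply D; auto.
  - destruct (mi_split_last n alpha k (eq_sym Hk)) as (j & alpha' & Hj & Ha' & E1 & E2 & Ha2).
    destruct (Hbound alpha' ltac:(apply (leM_le _ (n + 4)); auto; lia)) as (C1 & c' & Dc' & _).
    destruct (Hbound (mi_succ alpha j) ltac:(apply (leM_le _ (n + 4)); auto; lia))
      as (C2 & c2 & Dc2 & Bc2).
    assert (DU : xi_partial n l j c' G).
    { intros x Hx. apply (has_iter_snoc_partial n l (mi_list n alpha') j (a x)); auto.
      - apply mi_list_lt.
      - apply Dc'; auto.
      - rewrite <- E1. apply DG; auto. }
    assert (DV : xi_partial n l j G c2).
    { intros x Hx. apply (has_iter_snoc_partial n l (mi_list n alpha) j (a x)); auto.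
      - apply mi_list_lt.
      - apply DG; auto.
      - rewrite <- E2. apply Dc2; auto. }
    replace (m - rho * INR (S k)) with ((m - rho * INR k) - rho) by (rewrite S_INR; ring).
    apply (cauchy_at_infinity_xi_partial n l j c' G c2 _ rho C2 Hj Hrho DU DV).
    + intros x xi Hx Hxi. apply opnorm_entry_le.
      replace (m - rho * INR k - 2 * rho) with (m - rho * INR (mi_abs n (mi_succ alpha j)))
        by (rewrite Ha2, !S_INR; ring).
      auto.
    + apply (IH alpha'); auto; lia.
Qed.

Lemma uniform_limit_of_cauchy_at_infinity n l U Uinf p :
  (1 <= n)%nat -> (1 <= l)%nat -> cauchy_at_infinity n l U p ->
  (forall xi, inRn n xi -> forall eps, 0 < eps -> exists R0, forall x, inRn n x ->
     R0 <= vnorm n x -> opnorm_le l (msub (U x xi) (Uinf xi)) eps) ->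
  forall eps, 0 < eps -> exists R0, forall x, inRn n x -> R0 <= vnorm n x ->
    forall xi, inRn n xi -> opnorm_le l (msub (U x xi) (Uinf xi)) (eps * Rpower (jb n xi) p).
Proof.
  intros Hn Hl HU Hlim eps He.
  assert (Hl' : 0 < INR l) by (apply lt_0_INR; lia).
  set (e := eps / (4 * INR l)). assert (He' : 0 < e) by (unfold e; apply Rdiv_lt_0_compat; lra).
  destruct (HU e He') as [R0 HR]. exists R0. intros x Hx Rx xi Hxi.
  set (w := Rpower (jb n xi) p). assert (Hw : 0 < w) by apply exp_pos.
  destruct (Hlim xi Hxi (e * w) ltac:(nra)) as [R1 HR1].
  destruct (exists_far_point n (Rmax R0 R1) Hn) as [x' [Hx' Rx']].
  pose proof (Rmax_l R0 R1). pose proof (Rmax_r R0 R1).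
  pose proof (HR x x' Hx Hx' Rx ltac:(lra) xi Hxi) as Hcauchy.
  pose proof (opnorm_entry_le _ _ _ (HR1 x' Hx' ltac:(lra))) as Hconv.
  replace (eps * w) with (2 * INR l * (2 * e * w)) by (unfold e; field; lra).
  apply entry_le_opnorm; [nra|]. intros b i k Hi Hk.
  specialize (Hcauchy b i k Hi Hk). specialize (Hconv b i k Hi Hk).
  rewrite cproj_msub in *.
  replace (cproj b (U x xi i k) - cproj b (Uinf xi i k))
    with ((cproj b (U x xi i k) - cproj b (U x' xi i k))
          + (cproj b (U x' xi i k) - cproj b (Uinf xi i k))) by ring.
  eapply Rle_trans; [apply Rabs_triang|]. fold w in Hcauchy. lra.
Qed.

Theorem mainTheorem14
  (n l mt : nat) (rho delta m tau : R) (M : option nat)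
  (a : vec -> vec -> Mat) (ainf : (nat -> nat) -> vec -> Mat) :
  (1 <= l)%nat ->
  0 <= rho <= 1 -> 0 <= delta <= 1 -> 0 < tau < 1 ->
  leM (n + 4) M ->
  symbol_class n l mt tau m rho delta M a ->
  (forall alpha c, (mi_abs n alpha <= n + 3)%nat -> DXi n l alpha a c ->
     forall xi, inRn n xi ->
     forall eps, 0 < eps -> exists R0, forall x, inRn n x -> R0 <= vnorm n x ->
       opnorm_le l (msub (c x xi) (ainf alpha xi)) eps) ->
  (forall eps, 0 < eps -> exists R0, forall x, inRn n x -> R0 <= vnorm n x ->
     forall xi, inRn n xi ->
       opnorm_le l (msub (a x xi) (ainf mi_zero xi)) (eps * Rpower (jb n xi) m)) ->
  forall alpha c, (mi_abs n alpha <= n + 2)%nat -> DXi n l alpha a c ->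
    forall eps, 0 < eps -> exists R0, forall x, inRn n x -> R0 <= vnorm n x ->
      forall xi, inRn n xi ->
        opnorm_le l (msub (c x xi) (ainf alpha xi))
          (eps * Rpower (jb n xi) (m - rho * INR (mi_abs n alpha))).
Proof.
  intros Hl Hrho _ _ HM HS Hlim Hunif alpha c Ha Dc.
  destruct HS as (_ & _ & Hbound & _).
  destruct n as [|n'].
  - intros eps _. exists 1. intros x _ Hx.
    unfold vnorm in Hx. simpl in Hx. rewrite sqrt_0 in Hx. lra.
  - apply uniform_limit_of_cauchy_at_infinity; [lia | exact Hl | |].
    + exact (cauchy_at_infinity_xi_derivatives _ l m rho M a (ainf mi_zero)
               Hrho HM Hbound Hunif alpha c Ha Dc).
    + intros xi Hxi. apply (Hlim alpha c); auto; lia.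
Qed.
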